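(* Let $\mathbf{T}\in\{0,1\}^{n\times\ell}$ be a matrix all of whose columns are dirty, with $\delta(\mathbf{T})\le 2$. If $\mathcal{T}_2\neq\emptyset$, then $\ell\le|\mathcal{T}_2|+1$.
   Context: A column of a binary matrix is dirty if it contains both $0$ and $1$. For rows $u,w\in\{0,1\}^\ell$, $D(u,w)=\{j\in[\ell]: u[j]\ne w[j]\}$ and $d(u,w)=|D(u,w)|$ (Hamming distance); $\delta(\mathbf{T})=\max_{i\ne i'}d(\mathbf{T}[i],\mathbf{T}[i'])$, where $\mathbf{T}[i]$ is the $i$-th row. For $x\in\mathbb{N}$, $\mathcal{T}_x$ is the set system (without duplicates) $\{D(\mathbf{T}[i],\mathbf{T}[n]) : i\in[n-1],\ d(\mathbf{T}[i],\mathbf{T}[n])=x\}$. *)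

From mathcomp Require Import all_boot all_order all_algebra.
Set Implicit Arguments. Unset Strict Implicit. Unset Printing Implicit Defensive.

Definition dirty_col (m l : nat) (T : 'M[bool]_(m, l)) (j : 'I_l) : bool :=
  [exists i, T i j == false] && [exists i, T i j == true].

Definition Dset (m l : nat) (T : 'M[bool]_(m, l)) (i i' : 'I_m) : {set 'I_l} :=
  [set j | T i j != T i' j].

Definition dist (m l : nat) (T : 'M[bool]_(m, l)) (i i' : 'I_m) : nat :=
  #|Dset T i i'|.

Definition delta_le (m l : nat) (T : 'M[bool]_(m, l)) (k : nat) : Prop :=
  forall i i' : 'I_m, i != i' -> dist T i i' <= k.

(* T_x for a matrix with n.+1 rows, the last row being T[n] (= ord_max) *)
Definition Tsys (n l : nat) (T : 'M[bool]_(n.+1, l)) (x : nat) : {set {set 'I_l}} :=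
  [set Dset T i ord_max | i in [set i : 'I_n.+1 | (i != ord_max) && (dist T i ord_max == x)]].

From mathcomp Require Import all_boot all_order all_algebra.
From mathcomp Require Import zify.

Set Implicit Arguments.
Unset Strict Implicit.
Unset Printing Implicit Defensive.

(* Fix A = D(T[i0], T[n]) in T_2 and let B = D(T[i], T[n]) for another row i.
   Since D(T[i], T[i0]) is the symmetric difference of A and B, the bounds
   |B \ A| + |A \ B| <= 2 and |B| <= 2 give |B \ A| <= |A & B| <= 2 - |B \ A|,
   so |B \ A| <= 1, and B \ A <> {} forces |B| = 2, i.e. B is in T_2.  As every
   column is dirty, each column outside A lies in some B \ A, so the l - 2
   columns outside A are covered by the |T_2| - 1 sets B \ A (B in T_2, B <> A),
   each of size at most 1. *)

Lemma leq_card_bigcup (I T : finType) (P : {pred I}) (F : I -> {set T}) :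
  #|\bigcup_(i in P) F i| <= \sum_(i in P) #|F i|.
Proof.
elim/big_rec2: _ => [|i n U _ leUn]; first by rewrite cards0.
by rewrite (leq_trans (leq_card_setU _ _).1) ?leq_add2l.
Qed.

Lemma card_setD_le_setI (T : finType) (A B : {set T}) :
  #|A :\: B| + #|B :\: A| <= #|A| -> #|B :\: A| <= #|B :&: A|.
Proof. by have := cardsID B A; rewrite setIC; lia. Qed.

Section BinaryMatrix.

Variables m l : nat.
Variable T : 'M[bool]_(m, l).

Lemma Dset_symdiff i i' r :
  Dset T i i' = (Dset T i r :\: Dset T i' r) :|: (Dset T i' r :\: Dset T i r).
Proof.
by apply/setP => j; rewrite !inE; case: (T i j); case: (T i' j); case: (T r j).
Qed.

Lemma dist_card_setD i i' r :
  dist T i i' = #|Dset T i r :\: Dset T i' r| + #|Dset T i' r :\: Dset T i r|.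
Proof.
rewrite /dist (Dset_symdiff i i' r); apply/eqP; rewrite (leq_card_setU _ _).2.
rewrite -setI_eq0; apply/eqP/setP => j; rewrite !inE.
by case: (T i j); case: (T i' j); case: (T r j).
Qed.

Lemma dirty_colP j r : dirty_col T j -> exists i, T i j != T r j.
Proof.
case/andP=> /existsP[i0 /eqP Ti0] /existsP[i1 /eqP Ti1].
by case Trj: (T r j); [exists i0; rewrite Ti0 | exists i1; rewrite Ti1].
Qed.

End BinaryMatrix.

Section DiameterTwo.

Variables n l : nat.
Variable T : 'M[bool]_(n.+1, l).
Hypothesis T_delta : delta_le T 2.
Variable i0 : 'I_n.+1.
Hypothesis dist_i0 : dist T i0 ord_max = 2.

Let A := Dset T i0 ord_max.

Lemma card_Dset_setD_le_setI i :
  #|Dset T i ord_max :\: A| <= #|Dset T i ord_max :&: A|.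
Proof.
have [->|ne_ii0] := eqVneq i i0; first by rewrite setDv cards0.
apply: card_setD_le_setI; rewrite -dist_card_setD -[#|A|]/(dist T i0 ord_max) dist_i0.
by apply: T_delta; rewrite eq_sym.
Qed.

Lemma card_Dset_setD_le1 i : i != ord_max -> #|Dset T i ord_max :\: A| <= 1.
Proof.
move=> /T_delta le_dist2; have := card_Dset_setD_le_setI i.
by have := cardsID A (Dset T i ord_max); rewrite /dist in le_dist2; lia.
Qed.

Lemma Dset_in_Tsys i :
  i != ord_max -> ~~ (Dset T i ord_max \subset A) -> Dset T i ord_max \in Tsys T 2.
Proof.
move=> ne_imax; rewrite -setD_eq0 -cards_eq0 -lt0n => lt0_BA.
have := card_Dset_setD_le_setI i; have := T_delta ne_imax.
have := cardsID A (Dset T i ord_max); rewrite /dist => partB le_B2 le_BA.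
by apply/imsetP; exists i => //; rewrite inE ne_imax /dist; lia.
Qed.

Lemma setC_sub_bigcup :
  (forall j, dirty_col T j) ->
  ~: A \subset \bigcup_(B in Tsys T 2 :\ A) (B :\: A).
Proof.
move=> T_dirty; apply/subsetP => j; rewrite inE => notAj.
have [i neq_ij] := dirty_colP ord_max (T_dirty j).
have ne_imax : i != ord_max by apply: contraNneq neq_ij => ->.
have Bj : j \in Dset T i ord_max by rewrite inE.
apply/bigcupP; exists (Dset T i ord_max); last by rewrite inE Bj notAj.
rewrite !inE Dset_in_Tsys ?andbT //; last by apply/subsetPn; exists j.
by apply: contraNneq notAj => <-.
Qed.

End DiameterTwo.

Theorem lemma9 (n l : nat) (T : 'M[bool]_(n.+1, l)) :
  (forall j : 'I_l, dirty_col T j) ->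
  delta_le T 2 ->
  Tsys T 2 != set0 ->
  l <= #|Tsys T 2| + 1.
Proof.
move=> T_dirty T_delta /set0Pn[A T2A]; have /imsetP[i0 + defA] := T2A.
rewrite inE => /andP[_ /eqP dist_i0]; subst A.
set A := Dset T i0 ord_max in T2A *.
have card_compl : #|~: A| <= #|Tsys T 2 :\ A|.
  apply: leq_trans (subset_leq_card (setC_sub_bigcup T_delta dist_i0 T_dirty)) _.
  apply: leq_trans (leq_card_bigcup _ _) _; rewrite -sum1_card.
  apply: leq_sum => B /setD1P[_ /imsetP[i]]; rewrite inE => /andP[ne_imax _] ->.
  exact: card_Dset_setD_le1.
have cardA : #|A| = 2 := dist_i0.
apply: (@leq_trans (#|A| + #|~: A|)); first by rewrite cardsC card_ord.
by rewrite cardA (cardsD1 A (Tsys T 2)) T2A add1n addn1 add2n !ltnS.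
Qed.
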